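(* Let $i$ be a positive integer and let $C$ be an $\mathbb{F}$-linear $[n,k,d]$-code with ordered basis $B$. (a) ${\sf Code}(B,i)$ is an $\mathbb{F}$-linear $[n_i,k_i,d_i]$-code with \[ n_i=n\prod_{j=1}^{i}(k+j),\qquad k_i=k+i,\qquad d_i\ge d\prod_{j=1}^{i}(k+j-1). \] (b) Suppose that $C$ is $u$-bounded relative to $B$ for a positive integer $u$ satisfying $u\ge d(1+ik^{-1})$. Then \[ d_i=d\prod_{j=1}^{i}(k+j). \] Moreover, setting $u_i=u\prod_{j=1}^{i}(k+j-1)$, the code ${\sf Code}(B,i)$ is $u_i$-bounded relative to ${\sf Basis}(B,i)$ if and only if $u\ge d(1+(i+1)k^{-1})$.
   Context: $\mathbb{F}$ is an arbitrary field and vectors in $\mathbb{F}^n$ are column vectors. The weight $\mathrm{wt}(x)$ of $x\in\mathbb{F}^n$ is its number of nonzero coordinates. An $[n,k,d]$-code is a $k$-dimensional subspace of $\mathbb{F}^n$ whose minimum distance (the minimum weight of a nonzero codeword) is $d$. Boundedness: let $u$ be a positive integer and let $C$ be an $[n,k,d]$-code with ordered basis $B=(a_1,\dots,a_k)$. Then $C$ is $u$-bounded relative to $B$ if all three of the following hold: (i) $\mathrm{wt}(a_j)=u$ for every $j$; (ii) $\mathrm{wt}\big(\sum_{j=1}^k a_j\big)=d$; (iii) $u\ge d(1+k^{-1})$. Construction: for an ordered basis $B=(a_1,\dots,a_k)$ of a code $C\le\mathbb{F}^n$, set $a_0:=0\in\mathbb{F}^n$. For $m=1,\dots,k+1$,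 let $a'_m\in\mathbb{F}^{n(k+1)}$ be the column vector made of $k+1$ blocks of length $n$. Its $r$-th block, for $r=1,\dots,k+1$, is $a_{r-m}$, where the subscript is read modulo $k+1$ with representatives in $\{0,\dots,k\}$. Thus $a'_1=(0,a_1,\dots,a_k)^T$, $a'_2=(a_k,0,a_1,\dots,a_{k-1})^T$, …, $a'_{k+1}=(a_1,\dots,a_k,0)^T$ in block form. Define ${\sf Basis}(B)=(a'_1,\dots,a'_{k+1})$, and let ${\sf Code}(B)\le\mathbb{F}^{n(k+1)}$ be its $\mathbb{F}$-linear span. ${\sf Basis}(B)$ is an ordered basis of ${\sf Code}(B)$. Iteration: ${\sf Code}(B,1)={\sf Code}(B)$ and ${\sf Basis}(B,1)={\sf Basis}(B)$. For $i\ge2$, ${\sf Code}(B,i)={\sf Code}({\sf Basis}(B,i-1))$ and ${\sf Basis}(B,i)={\sf Basis}({\sf Basis}(B,i-1))$. *)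

(* Codes are row spaces of matrices over a field F;
   vectors of F^n are represented as row vectors 'rV[F]_n (transpose of the
   paper's column convention; immaterial). An ordered basis (a_1,...,a_k) of a
   code is a k x n matrix whose j-th row is a_j. *)
From HB Require Import structures.
From mathcomp Require Import all_boot all_order all_algebra.
Set Implicit Arguments. Unset Strict Implicit. Unset Printing Implicit Defensive.
Import GRing.Theory.
Local Open Scope ring_scope.

Section Codes.
Variable F : fieldType.

Definition wt n (x : 'rV[F]_n) : nat := #|[set j : 'I_n | x 0 j != 0]|.

Definition is_mindist m n (C : 'M[F]_(m, n)) (d : nat) : Prop :=
  (exists x : 'rV[F]_n, [/\ (x <= C)%MS, x != 0 & wt x = d]) /\
  (forall x : 'rV[F]_n, (x <= C)%MS -> x != 0 -> (d <= wt x)%N).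

(* the code spanned by the rows of B (m rows) is u-bounded relative to B:
   (i) wt(a_j) = u, (ii) wt(sum a_j) = d, (iii) u >= d(1 + 1/m) i.e. u*m >= d*(m+1) *)
Definition u_bounded m n (B : 'M[F]_(m, n)) (u : nat) : Prop :=
  exists2 d, is_mindist B d &
    [/\ forall j : 'I_m, wt (row j B) = u,
        wt (\sum_(j < m) row j B) = d
      & (d * m.+1 <= u * m)%N].

(* entry t (0-based) of a_{s+1}, or 0 if out of range *)
Definition blk m p (B : 'M[F]_(m, p)) (s t : nat) : F :=
  match (insub s : option 'I_m), (insub t : option 'I_p) with
  | Some a, Some b => B a b
  | _, _ => 0
  end.

(* Basis(B): row r (0-based, i.e. a'_{r+1}) has in block b (0-based, i.e. the
   (b+1)-th block) the vector a_{(b - r) mod (m+1)}, with a_0 = 0. *)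
Definition Basis m p (B : 'M[F]_(m, p)) : 'M[F]_(m.+1, m.+1 * p) :=
  \matrix_(r < m.+1, c < m.+1 * p)
    (let s := (((c %/ p) + m.+1 - r) %% m.+1)%N in
     if s == 0%N then 0 else blk B s.-1 (c %% p)%N).

Fixpoint Ndim (n k i : nat) : nat :=
  match i with 0 => n | i'.+1 => (i' + k).+1 * Ndim n k i' end.

Fixpoint BasisIter k n (B : 'M[F]_(k, n)) (i : nat) : 'M[F]_(i + k, Ndim n k i) :=
  match i return 'M[F]_(i + k, Ndim n k i) with
  | 0 => B
  | i'.+1 => Basis (BasisIter B i')
  end.

End Codes.

(* Write an element of F^((m+1)p) as m+1 consecutive blocks of length p.  A
   codeword x = c *m Basis B of Code(B) has, in block b, the codeword
   (sum_j c_{b-j} a_j) of C, so its weight is the sum of the weights of m+1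
   codewords of C whose coefficient vectors are cyclic shifts of c.  Either all
   these coefficient vectors are nonzero, and then wt x >= (m+1) d, or one of
   them vanishes, which forces c to be a multiple of a unit vector, and then x
   is a multiple of a basis vector a'_r, whose weight is sum_j wt(a_j). *)
From HB Require Import structures.
From mathcomp Require Import all_boot all_order all_algebra zify.
From Stdlib Require Import Classical.
Set Implicit Arguments. Unset Strict Implicit. Unset Printing Implicit Defensive.
Import GRing.Theory.
Local Open Scope ring_scope.

Section Weights.
Variable F : fieldType.

Lemma wtE q (x : 'rV[F]_q) : wt x = (\sum_j (x 0%R j != 0%R : nat))%N.
Proof.
rewrite /wt -sum1_card big_mkcond /=; apply: eq_bigr => j _.
by rewrite inE; case: (x 0 j != 0).
Qed.

Lemma wt0 q : wt (0 : 'rV[F]_q) = 0%N.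
Proof. by rewrite wtE big1 // => j _; rewrite mxE eqxx. Qed.

Lemma wt_gt0 q (x : 'rV[F]_q) : x != 0 -> (0 < wt x)%N.
Proof.
move=> x_nz; rewrite /wt card_gt0; apply: contraNneq x_nz => /setP supp0.
by apply/eqP/rowP => j; move: (supp0 j); rewrite !inE mxE => /negbFE/eqP.
Qed.

Lemma wtZ q (a : F) (x : 'rV[F]_q) : a != 0 -> wt (a *: x) = wt x.
Proof. by move=> a_nz; apply: eq_card => j; rewrite !inE mxE mulf_eq0 negb_or a_nz. Qed.

Lemma sum_rows_mul_const q n (A : 'M[F]_(q, n)) : \sum_r row r A = const_mx 1 *m A.
Proof. by rewrite mulmx_sum_row; apply: eq_bigr => r _; rewrite mxE scale1r. Qed.

Definition wt_lb m n (C : 'M[F]_(m, n)) (w : nat) : Prop :=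
  forall x : 'rV[F]_n, (x <= C)%MS -> x != 0 -> (w <= wt x)%N.

Lemma mindist_unique m n (C : 'M[F]_(m, n)) d1 d2 :
  is_mindist C d1 -> is_mindist C d2 -> d1 = d2.
Proof.
move=> [[x1 [C_x1 x1_nz <-]] lb1] [[x2 [C_x2 x2_nz <-]] lb2].
by apply/eqP; rewrite eqn_leq lb1 // lb2.
Qed.

Lemma mindist_ge m n (C : 'M[F]_(m, n)) d w :
  is_mindist C d -> wt_lb C w -> (w <= d)%N.
Proof. by move=> [[x [C_x x_nz <-]] _] lbC; exact: lbC. Qed.

(* A code with a nonzero codeword has a minimum distance (well-ordering of
   the weights of its nonzero codewords, argued classically). *)
Lemma mindist_exists m n (C : 'M[F]_(m, n)) :
  C != 0 -> exists d, is_mindist C d.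
Proof.
move=> C_nz.
have [x [C_x x_nz]] : exists x : 'rV[F]_n, (x <= C)%MS /\ x != 0.
  have [r r_nz] : exists r, row r C != 0.
    apply: NNPP => no_row; case/eqP: C_nz; apply/row_matrixP => r.
    by rewrite row0; apply: NNPP => r_nz; apply: no_row; exists r; apply/eqP.
  by exists (row r C); split=> //; exact: row_sub.
elim: {x}(wt x) {-2}x (leqnn (wt x)) C_x x_nz => [|w IH] x wt_x C_x x_nz.
  by move: (wt_gt0 x_nz); rewrite leqNgt ltnS wt_x.
have [[y [C_y y_nz lt_yx]] | no_lighter] :=
  classic (exists y : 'rV[F]_n, [/\ (y <= C)%MS, y != 0 & (wt y < wt x)%N]).
  by apply: (IH y) => //; rewrite -ltnS (leq_trans lt_yx).
exists (wt x); split; first by exists x.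
move=> y C_y y_nz; rewrite leqNgt; apply/negP => lt_yx.
by apply: no_lighter; exists y.
Qed.

Lemma mindist_rows_gt0 m n (C : 'M[F]_(m, n)) d : is_mindist C d -> (0 < m)%N.
Proof.
move=> [[x [C_x x_nz _]] _]; have := mxrankS C_x; have := rank_leq_row C.
by rewrite -mxrank_eq0 in x_nz; lia.
Qed.

(* The rows of a row-free matrix are nonzero codewords, so their weights
   add up to at least m w. *)
Lemma sum_wt_rows_ge m n (C : 'M[F]_(m, n)) w :
  row_free C -> wt_lb C w -> (m * w <= \sum_j wt (row j C))%N.
Proof.
move=> freeC lbC; rewrite -[X in (X * _)%N]card_ord -sum_nat_const.
apply: leq_sum => j _; apply: lbC; first exact: row_sub.
rewrite rowE mulmx_free_eq0 //; apply/eqP => /rowP /(_ j).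
by rewrite !mxE !eqxx; apply/eqP/oner_neq0.
Qed.

End Weights.

Section Blocks.
Variables (m p : nat).

Lemma block_col_subproof (b : 'I_m.+1) (t : 'I_p) : (b * p + t < m.+1 * p)%N.
Proof. by have := ltn_ord b; have := ltn_ord t; nia. Qed.

Definition block_col (b : 'I_m.+1) (t : 'I_p) : 'I_(m.+1 * p) :=
  Ordinal (block_col_subproof b t).

End Blocks.

Lemma sum_blocks m p (f : 'I_(m.+1 * p) -> nat) :
  (\sum_c f c = \sum_(b < m.+1) \sum_(t < p) f (block_col b t))%N.
Proof.
case: p f => [|p'] f.
  rewrite big1 => [|c _]; last by have := ltn_ord c; rewrite {2}muln0.
  by rewrite big1 // => b _; rewrite big_ord0.
rewrite pair_big /= (reindex (fun bt : 'I_m.+1 * 'I_p'.+1 => block_col bt.1 bt.2)) //.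
exists (fun c : 'I_(m.+1 * p'.+1) => (inord (c %/ p'.+1), inord (c %% p'.+1))).
  move=> [b t] _; congr (_, _); apply: val_inj; rewrite /= inordK.
  - by rewrite divnMDl // divn_small ?addn0.
  - by rewrite divnMDl // divn_small ?addn0.
  - by rewrite modnMDl modn_small.
  - by rewrite modnMDl modn_small.
move=> c _; apply: val_inj; rewrite /= !inordK ?ltn_pmod // -?divn_eq //.
by rewrite ltn_divLR.
Qed.

Section BlockWeights.
Variables (F : fieldType) (m p : nat).

Definition block (x : 'rV[F]_(m.+1 * p)) (b : 'I_m.+1) : 'rV[F]_p :=
  \row_t x 0 (block_col b t).

Lemma wt_blocks (x : 'rV[F]_(m.+1 * p)) : wt x = (\sum_b wt (block x b))%N.
Proof.
rewrite wtE sum_blocks; apply: eq_bigr => b _.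
by rewrite wtE; apply: eq_bigr => t _; rewrite mxE.
Qed.

End BlockWeights.

Section OneStep.
Variables (F : fieldType) (m p : nat) (B : 'M[F]_(m, p)).

(* The vector a_s of the construction, indices read in Z/(m+1), a_0 = 0. *)
Definition cyc_row (s : 'I_m.+1) : 'rV[F]_p :=
  if unlift ord0 s is Some j then row j B else 0.

Lemma Basis_block_col r b t : Basis B r (block_col b t) = cyc_row (b - r) 0 t.
Proof.
have p_gt0 : (0 < p)%N by case: (posnP p) t => [-> []|].
rewrite mxE /= divnMDl // (divn_small (ltn_ord t)) addn0 modnMDl (modn_small (ltn_ord t)).
have -> : ((b + m.+1 - r) %% m.+1)%N = val (b - r).
  by rewrite /= modnDmr addnBA // ltnW.
rewrite /cyc_row; case: unliftP => [j ->|->]; last by rewrite mxE.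
by rewrite /= /blk !valK mxE.
Qed.

Lemma block_row_Basis r b : block (row r (Basis B)) b = cyc_row (b - r).
Proof. by apply/rowP => t; rewrite mxE [in LHS]mxE Basis_block_col. Qed.

(* The coefficients c_{b-1}, ..., c_{b-m} (indices mod m+1) that combine
   a_1, ..., a_m in block b of c *m Basis B. *)
Definition coef_word (c : 'rV[F]_m.+1) (b : 'I_m.+1) : 'rV[F]_m :=
  \row_j c 0 (b - lift ord0 j).

Lemma block_mul_Basis (c : 'rV[F]_m.+1) b :
  block (c *m Basis B) b = coef_word c b *m B.
Proof.
apply/rowP => t; rewrite !mxE.
under eq_bigr do rewrite Basis_block_col.
rewrite (reindex_inj (subrI b)) /= big_ord_recl /= subKr /cyc_row unlift_none.
rewrite mxE mulr0 add0r; apply: eq_bigr => j _.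
by rewrite !mxE subKr liftK mxE.
Qed.

Lemma wt_row_Basis r : wt (row r (Basis B)) = (\sum_j wt (row j B))%N.
Proof.
rewrite wt_blocks; under eq_bigr do rewrite block_row_Basis.
rewrite (reindex_inj (addIr r)) /=; under eq_bigr do rewrite addrK.
rewrite big_ord_recl {1}/cyc_row unlift_none wt0 add0n.
by apply: eq_bigr => j _; rewrite /cyc_row liftK.
Qed.

Lemma wt_sum_Basis : wt (\sum_r row r (Basis B)) = (m.+1 * wt (\sum_j row j B))%N.
Proof.
rewrite sum_rows_mul_const wt_blocks.
under eq_bigr do rewrite block_mul_Basis.
have coef1 b : coef_word (const_mx 1) b = const_mx 1 by apply/rowP => j; rewrite !mxE.
under eq_bigr do rewrite coef1.
by rewrite -sum_rows_mul_const sum_nat_const card_ord.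
Qed.

Lemma coef_word_eq0 (c : 'rV[F]_m.+1) b r : coef_word c b = 0 -> r != b -> c 0 r = 0.
Proof.
move=> /rowP cb0 r_b; have : ord0 != b - r by rewrite eq_sym subr_eq0 eq_sym.
by case/unlift_some => j br _; move: (cb0 j); rewrite !mxE -br subKr.
Qed.

Lemma coef_word_eq0_delta (c : 'rV[F]_m.+1) b : coef_word c b = 0 -> c = c 0 b *: 'e_b.
Proof.
move=> cb0; apply/rowP => r; rewrite !mxE.
by have [->|r_b] := eqVneq r b; rewrite ?mulr1 ?(coef_word_eq0 cb0 r_b) ?mulr0.
Qed.

Hypothesis freeB : row_free B.

(* (1) Basis B is again an ordered basis: if c *m Basis B = 0, every
   coefficient word vanishes, and each c_r lies outside some word. *)
Lemma Basis_row_free : (0 < m)%N -> row_free (Basis B).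
Proof.
move=> m_gt0; apply: inj_row_free => c cB0.
have coef0 b : coef_word c b = 0.
  apply/eqP; rewrite -(mulmx_free_eq0 _ freeB) -block_mul_Basis cB0.
  by apply/eqP/rowP => t; rewrite !mxE.
apply/rowP => r; rewrite mxE; apply: (coef_word_eq0 (coef0 (lift r (Ordinal m_gt0)))).
exact: neq_lift.
Qed.

Lemma wt_Basis_codeword w x : wt_lb B w -> (x <= Basis B)%MS -> x != 0 ->
  (m.+1 * w <= wt x)%N \/ wt x = (\sum_j wt (row j B))%N.
Proof.
move=> lbB /submxP [c ->] x_nz.
have [all_nz | ] := boolP [forall b, coef_word c b != 0].
  left; rewrite wt_blocks -[X in (X * _)%N]card_ord -sum_nat_const.
  apply: leq_sum => b _; rewrite block_mul_Basis; apply: lbB; first exact: submxMl.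
  by rewrite mulmx_free_eq0 // (forallP all_nz).
rewrite negb_forall => /existsP [b]; rewrite negbK => /eqP /coef_word_eq0_delta c_delta.
right; rewrite c_delta -scalemxAl -rowE wtZ ?wt_row_Basis //.
by apply: contraNneq x_nz => cb0; rewrite c_delta cb0 scale0r mul0mx.
Qed.

Lemma Basis_wt_lb w : wt_lb B w -> wt_lb (Basis B) (m * w).
Proof.
move=> lbB x Bx x_nz; case: (wt_Basis_codeword lbB Bx x_nz) => [|->].
  by apply: leq_trans; rewrite leq_mul2r leqnSn orbT.
exact: sum_wt_rows_ge.
Qed.

End OneStep.

Section Profiles.
Variable F : fieldType.

Definition profile m n (C : 'M[F]_(m, n)) (u d : nat) : Prop :=
  [/\ is_mindist C d, forall j, wt (row j C) = u & wt (\sum_j row j C) = d].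

Lemma u_boundedE m n (C : 'M[F]_(m, n)) u d : is_mindist C d ->
  u_bounded C u <-> profile C u d /\ (d * m.+1 <= u * m)%N.
Proof.
move=> dC; split; last by case=> [[_ rowsC sumC] cond]; exists d.
by case=> d' dC'; rewrite (mindist_unique dC' dC) => -[rowsC sumC cond].
Qed.

Lemma Basis_profile m p (B : 'M[F]_(m, p)) u d :
  row_free B -> profile B u d -> (d * m.+1 <= u * m)%N ->
  profile (Basis B) (m * u) (m.+1 * d).
Proof.
move=> freeB [dB rowsB sumB] ineq.
have wt_rows r : wt (row r (Basis B)) = (m * u)%N.
  by rewrite wt_row_Basis; under eq_bigr do rewrite rowsB; rewrite sum_nat_const card_ord.
have wt_sum : wt (\sum_r row r (Basis B)) = (m.+1 * d)%N by rewrite wt_sum_Basis sumB.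
split=> //; split.
  exists (\sum_r row r (Basis B)); split=> //.
    by apply: summx_sub => r _; exact: row_sub.
  have d_gt0 : (0 < d)%N by case: dB => [[x [_ x_nz <-]] _]; exact: wt_gt0.
  by apply/eqP => sum0; move: wt_sum; rewrite sum0 wt0; lia.
move=> x Bx x_nz; case: (wt_Basis_codeword freeB dB.2 Bx x_nz) => [//|->].
by under eq_bigr do rewrite rowsB; rewrite sum_nat_const card_ord; lia.
Qed.

End Profiles.

Section Products.
Variable k : nat.

Lemma prod_succ i :
  (\prod_(1 <= j < i.+2) (k + j) = \prod_(1 <= j < i.+1) (k + j) * (k + i.+1))%N.
Proof. by rewrite big_nat_recr. Qed.

Lemma prod_pred_succ i :
  (\prod_(1 <= j < i.+2) (k + j - 1) = \prod_(1 <= j < i.+1) (k + j - 1) * (k + i))%N.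
Proof. by rewrite big_nat_recr //= addnS subn1. Qed.

Lemma prod_gt0 i : (0 < \prod_(1 <= j < i.+1) (k + j))%N.
Proof.
by rewrite big_seq_cond prodn_cond_gt0 // => j /andP[+ _]; rewrite mem_index_iota; lia.
Qed.

Lemma prod_pred_shift i :
  (\prod_(1 <= j < i.+1) (k + j - 1) * (k + i) = k * \prod_(1 <= j < i.+1) (k + j))%N.
Proof.
elim: i => [|i IH]; first by rewrite !big_geq // addn0 mul1n muln1.
by rewrite prod_pred_succ prod_succ mulnA -IH.
Qed.

Lemma Ndim_prod n i : Ndim n k i = (n * \prod_(1 <= j < i.+1) (k + j))%N.
Proof.
elim: i => [|i IH]; first by rewrite big_geq // muln1.
by rewrite /= IH prod_succ; lia.
Qed.

(* At stage i, condition (iii) of boundedness for Basis(B,i) (which has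
   k+i rows, row weight u prod (k+j-1) and row-sum weight d prod (k+j))
   is the condition u >= d (1 + (i+1)/k) on the original code. *)
Lemma stage_condition_iff i d u :
  (d * \prod_(1 <= j < i.+1) (k + j) * (i + k).+1 <=
   u * \prod_(1 <= j < i.+1) (k + j - 1) * (i + k))%N =
  (d * (k + i.+1) <= u * k)%N.
Proof.
have shift := prod_pred_shift i; have P_gt0 := prod_gt0 i.
move: shift P_gt0; set P := (\prod_(1 <= j < i.+1) (k + j))%N.
set Q := (\prod_(1 <= j < i.+1) (k + j - 1))%N => shift P_gt0.
have -> : (u * Q * (i + k) = u * k * P)%N by rewrite -mulnA addnC shift mulnA.
have -> : (d * P * (i + k).+1 = d * (k + i.+1) * P)%N by rewrite mulnAC addnS addnC.
by rewrite leq_pmul2r.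
Qed.

End Products.

Section Iteration.
Variables (F : fieldType) (n k d : nat) (B : 'M[F]_(k, n)).
Hypotheses (freeB : row_free B) (dB : is_mindist B d).

Lemma BasisIter_row_free_wt_lb i :
  row_free (BasisIter B i) /\
  wt_lb (BasisIter B i) (d * \prod_(1 <= j < i.+1) (k + j - 1))%N.
Proof.
have k_gt0 := mindist_rows_gt0 dB.
elim: i => [|i [freeBi lbBi]] /=; first by rewrite big_geq // muln1; case: dB.
split; first exact: Basis_row_free freeBi (ltn_addl i k_gt0).
rewrite prod_pred_succ mulnA [(_ * (k + i))%N]mulnC [(k + i)%N]addnC.
exact (Basis_wt_lb freeBi lbBi).
Qed.

Lemma BasisIter_profile u i : profile B u d -> (d * (k + i) <= u * k)%N ->
  profile (BasisIter B i)
    (u * \prod_(1 <= j < i.+1) (k + j - 1))%N (d * \prod_(1 <= j < i.+1) (k + j))%N.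
Proof.
move=> profB; elim: i => [|i IH] cond; first by rewrite !big_geq // !muln1.
have profBi : profile (BasisIter B i)
    (u * \prod_(1 <= j < i.+1) (k + j - 1))%N (d * \prod_(1 <= j < i.+1) (k + j))%N.
  by apply: IH; apply: leq_trans cond; rewrite leq_mul2l addnS leqnSn orbT.
have step := Basis_profile (BasisIter_row_free_wt_lb i).1 profBi.
rewrite stage_condition_iff in step.
rewrite prod_succ prod_pred_succ.
have -> : (u * (\prod_(1 <= j < i.+1) (k + j - 1) * (k + i)) =
           (i + k) * (u * \prod_(1 <= j < i.+1) (k + j - 1)))%N by lia.
have -> : (d * (\prod_(1 <= j < i.+1) (k + j) * (k + i.+1)) =
           (i + k).+1 * (d * \prod_(1 <= j < i.+1) (k + j)))%N by lia.
exact (step cond).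
Qed.

End Iteration.

Theorem proposition3p5 (F : fieldType) (n k d i : nat) (B : 'M[F]_(k, n)) :
  (0 < i)%N -> row_free B -> is_mindist B d ->
  [/\ Ndim n k i = (n * \prod_(1 <= j < i.+1) (k + j))%N,
      \rank (BasisIter B i) = (k + i)%N,
      exists2 di, is_mindist (BasisIter B i) di &
        (d * \prod_(1 <= j < i.+1) (k + j - 1) <= di)%N
    & forall u di : nat, (0 < u)%N -> u_bounded B u ->
        (d * (k + i) <= u * k)%N ->
        is_mindist (BasisIter B i) di ->
        di = (d * \prod_(1 <= j < i.+1) (k + j))%N /\
        (u_bounded (BasisIter B i) (u * \prod_(1 <= j < i.+1) (k + j - 1))
           <-> (d * (k + i.+1) <= u * k)%N)].
Proof.
move=> _ freeB dB; have k_gt0 := mindist_rows_gt0 dB.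
have [freeBi lbBi] := BasisIter_row_free_wt_lb freeB dB i.
split.
- exact: Ndim_prod.
- by rewrite (eqP freeBi) addnC.
- have [di dBi] : exists di, is_mindist (BasisIter B i) di.
    by apply: mindist_exists; rewrite -mxrank_eq0 (eqP freeBi); lia.
  by exists di => //; exact: mindist_ge lbBi.
move=> u di _ /(u_boundedE _ dB) [profB _] cond dBi.
have profBi := BasisIter_profile freeB dB profB cond.
have [dBi' _ _] := profBi.
rewrite (mindist_unique dBi dBi') (u_boundedE _ dBi') stage_condition_iff.
by split=> //; split=> [[]|].
Qed.
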